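(* Let $r \geq 2$ and let $D=\{d_1<d_2<d_3<\dotsb\}$ be an infinite set of positive integers. If there exist a real number $\delta>0$ and a positive integer $N$ such that $$d_{n+1} \geq \left(2+\frac{1}{r-1}+\delta\right)d_n \quad\text{for all } n \geq N,$$ then $D$ is not $r$-accessible; that is, $\operatorname{doa}(D) \leq r-1$.
   Context: An $r$-coloring of a set $A$ is a function $\chi:A\to\{1,\dots,r\}$. For $D\subseteq\mathbb{N}=\{1,2,3,\dots\}$, a $k$-term $D$-diffsequence is a sequence of integers $x_1,\dots,x_k$ with $x_{i+1}-x_i\in D$ for all $1\le i\le k-1$. A set $D\subseteq\mathbb{N}$ is $r$-accessible if for every $r$-coloring of $\mathbb{N}$ and every $k\ge1$ there is a monochromatic $k$-term $D$-diffsequence in $\mathbb{N}$. The degree of accessibility $\operatorname{doa}(D)$ is the greatest positive integer $r$ for which $D$ is $r$-accessible ($\operatorname{doa}(D)=\infty$ if $D$ is $r$-accessible for all $r$). *)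

From Stdlib Require Import Reals Lia Lra.

(* A subset of the positive integers is a predicate D : nat -> Prop
   (only its values on positive integers matter; we require D ⊆ N = {1,2,...}). *)

Definition mono_diffseq (D : nat -> Prop) (chi : nat -> nat) (k : nat) : Prop :=
  exists (x : nat -> nat) (c : nat),
    (forall i, 1 <= i <= k -> 1 <= x i /\ chi (x i) = c) /\
    (forall i, 1 <= i < k -> x i < x (S i) /\ D (x (S i) - x i)).

Definition accessible (r : nat) (D : nat -> Prop) : Prop :=
  forall chi : nat -> nat,
    (forall n, 1 <= n -> chi n < r) ->
    forall k, 1 <= k -> mono_diffseq D chi k.

Definition range_from1 (d : nat -> nat) : nat -> Prop :=
  fun m => exists n, 1 <= n /\ d n = m.

From Stdlib Require Import Reals Lia Lra ZArith.
Open Scope R_scope.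

(* Choose al so that every [d n * al] lies modulo 1 in a window [[c, 1 - 1/r]]
   with [c > 0]; nested intervals make this possible because the ratios
   [d (n+1) / d n] eventually exceed [2 + 1/(r-1)].  Color [x] by the arc of
   length [1/r] containing the fractional part of [x * al].  For two terms of
   a monochromatic D-diffsequence, [floor (r x al)] changes by a multiple of
   [r], which forces the fractional part of [r x al] to grow by at least
   [r c]; so such sequences have bounded length. *)

Definition frac_in (c U x : R) : Prop :=
  exists m : Z, IZR m + c <= x <= IZR m + U.

Lemma frac_in_weaken (c c' U U' x : R) :
  c' <= c -> U <= U' -> frac_in c U x -> frac_in c' U' x.
Proof. intros Hc HU [m Hm]; exists m; lra. Qed.

Lemma nested_intervals (a b : nat -> R) :
  Un_growing a -> Un_decreasing b -> (forall k, a k <= b k) ->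
  exists x, forall k, a k <= x <= b k.
Proof.
  intros Ha Hb Hab.
  assert (Hall : forall j k, a j <= b k).
  { intros j k; destruct (Nat.le_ge_cases j k) as [Hjk | Hkj].
    - pose proof (growing_prop a k j Ha Hjk); pose proof (Hab k); lra.
    - pose proof (decreasing_prop b k j Hb Hkj); pose proof (Hab j); lra. }
  destruct (completeness (fun x => exists k, x = a k)) as [x [Hub Hlub]].
  - exists (b O); intros y [k ->]; apply Hall.
  - exists (a O); eauto.
  - exists x; intro k; split.
    + apply Hub; eauto.
    + apply Hlub; intros y [j ->]; apply Hall.
Qed.

Section Lacunary.

Variables (e : nat -> R) (q w c : R).
Hypothesis e_pos : forall k, 0 < e k.
Hypothesis e_growth : forall k, e (S k) >= q * e k.
Hypothesis w_ge0 : 0 <= w.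
Hypothesis w_gap : w * (q - 1) >= 1.

(* [e k * lac_left k] is the least point above [e k * lac_left (k-1)] that is
   congruent to [c] modulo 1. *)
Fixpoint lac_left (k : nat) : R :=
  match k with
  | O => c / e O
  | S k => (IZR (up (lac_left k * e (S k) - c)) + c) / e (S k)
  end.

Definition lac_right (k : nat) : R := lac_left k + w / e k.

Lemma e_lac_left_0 : e O * lac_left O = c.
Proof. pose proof (e_pos O); simpl; field; lra. Qed.

Lemma e_lac_left_succ (k : nat) :
  e (S k) * lac_left (S k) = IZR (up (lac_left k * e (S k) - c)) + c.
Proof.
  pose proof (e_pos (S k)).
  change (lac_left (S k)) with ((IZR (up (lac_left k * e (S k) - c)) + c) / e (S k)).
  field; lra.
Qed.

Lemma e_lac_left_frac (k : nat) : exists m : Z, e k * lac_left k = IZR m + c.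
Proof.
  destruct k as [| k].
  - exists 0%Z; rewrite e_lac_left_0; lra.
  - eexists; apply e_lac_left_succ.
Qed.

Lemma lac_left_growing : Un_growing lac_left.
Proof.
  intro k; pose proof (e_lac_left_succ k).
  destruct (archimed (lac_left k * e (S k) - c)) as [Hup _].
  pose proof (e_pos (S k)).
  apply Rmult_le_reg_l with (e (S k)); lra.
Qed.

Lemma lac_right_decreasing : Un_decreasing lac_right.
Proof.
  intro k; unfold lac_right.
  pose proof (e_lac_left_succ k).
  destruct (archimed (lac_left k * e (S k) - c)) as [_ Hup].
  pose proof (e_pos k); pose proof (e_pos (S k)); pose proof (e_growth k).
  assert (Hw : (1 + w) * e k <= w * e (S k)) by nra.
  apply Rmult_le_reg_l with (e k * e (S k)); [nra |].
  replace (e k * e (S k) * (lac_left (S k) + w / e (S k)))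
    with (e k * (e (S k) * lac_left (S k)) + e k * w) by (field; lra).
  replace (e k * e (S k) * (lac_left k + w / e k))
    with (e k * (e (S k) * lac_left k) + e (S k) * w) by (field; lra).
  nra.
Qed.

Lemma lacunary_frac_in :
  exists al, c <= e O * al <= c + w /\ forall k, frac_in c (c + w) (e k * al).
Proof.
  destruct (nested_intervals lac_left lac_right lac_left_growing lac_right_decreasing)
    as [al Hal].
  { intro k; unfold lac_right; pose proof (e_pos k).
    assert (0 <= w / e k) by (apply Rle_mult_inv_pos; lra); lra. }
  assert (Hin : forall k, e k * lac_left k <= e k * al <= e k * lac_left k + w).
  { intro k; destruct (Hal k) as [Hl Hr]; unfold lac_right in Hr; pose proof (e_pos k).
    split; [nra |].
    replace (e k * lac_left k + w) with (e k * (lac_left k + w / e k)) by (field; lra).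
    nra. }
  exists al; split.
  - pose proof (Hin O); rewrite e_lac_left_0 in *; lra.
  - intro k; destruct (e_lac_left_frac k) as [m Hm]; exists m.
    pose proof (Hin k); lra.
Qed.

End Lacunary.

Lemma frac_part_gap (n m : Z) (u v c : R) :
  (0 < n)%Z -> 0 <= c ->
  IZR (n * m) + c <= v - u <= IZR (n * m) + IZR n - 1 ->
  (Int_part u mod n = Int_part v mod n)%Z ->
  frac_part u + c <= frac_part v.
Proof.
  intros Hn Hc Huv Hmod; unfold frac_part.
  destruct (base_Int_part u) as [Hu1 Hu2]; destruct (base_Int_part v) as [Hv1 Hv2].
  assert (Hmult : (Int_part v - Int_part u = n * (Int_part v / n - Int_part u / n))%Z).
  { pose proof (Z.div_mod (Int_part u) n ltac:(lia)).
    pose proof (Z.div_mod (Int_part v) n ltac:(lia)); lia. }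
  assert (Hlt : (Int_part v - Int_part u < n * m + n)%Z).
  { apply lt_IZR; rewrite minus_IZR, plus_IZR; lra. }
  assert (Hgt : (n * m - 1 < Int_part v - Int_part u)%Z).
  { apply lt_IZR; rewrite !minus_IZR; lra. }
  assert (Hdiff : (Int_part v - Int_part u = n * m)%Z).
  { rewrite Hmult in Hlt, Hgt |- *; f_equal; nia. }
  apply (f_equal IZR) in Hdiff; rewrite minus_IZR in Hdiff; lra.
Qed.

(* [x] gets color [j < r] when the fractional part of [x * al] lies in the arc
   [[j/r, (j+1)/r)]. *)
Definition arc_coloring (r : nat) (al : R) (x : nat) : nat :=
  Z.to_nat (Int_part (INR r * (INR x * al)) mod Z.of_nat r).

Lemma arc_coloring_lt (r : nat) (al : R) (x : nat) :
  (0 < r)%nat -> (arc_coloring r al x < r)%nat.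
Proof.
  intro Hr; unfold arc_coloring.
  pose proof (Z.mod_pos_bound (Int_part (INR r * (INR x * al))) (Z.of_nat r) ltac:(lia)); lia.
Qed.

Lemma arc_coloring_step (r : nat) (al c : R) (x y : nat) :
  (0 < r)%nat -> 0 <= c -> (x <= y)%nat ->
  frac_in c (1 - / INR r) (INR (y - x) * al) ->
  arc_coloring r al x = arc_coloring r al y ->
  frac_part (INR r * (INR x * al)) + INR r * c <= frac_part (INR r * (INR y * al)).
Proof.
  intros Hr Hc Hxy [m Hm] Hcol.
  assert (Hr' : 0 < INR r) by (apply lt_0_INR; lia).
  apply (frac_part_gap (Z.of_nat r) m); [lia | nra | |].
  - rewrite mult_IZR, <- INR_IZR_INZ, minus_INR in * by lia.
    replace (INR r * (INR y * al) - INR r * (INR x * al))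
      with (INR r * ((INR y - INR x) * al)) by ring.
    replace (INR r * IZR m + INR r - 1) with (INR r * (IZR m + (1 - / INR r))) by (field; lra).
    split; [rewrite <- Rmult_plus_distr_l |]; apply Rmult_le_compat_l; lra.
  - unfold arc_coloring in Hcol.
    pose proof (Z.mod_pos_bound (Int_part (INR r * (INR x * al))) (Z.of_nat r) ltac:(lia)).
    pose proof (Z.mod_pos_bound (Int_part (INR r * (INR y * al))) (Z.of_nat r) ltac:(lia)).
    lia.
Qed.

Lemma not_accessible_of_frac_in (r : nat) (D : nat -> Prop) (al c : R) :
  (0 < r)%nat -> 0 < c ->
  (forall n, D n -> frac_in c (1 - / INR r) (INR n * al)) -> ~ accessible r D.
Proof.
  intros Hr Hc HD Hacc.
  assert (Hrc : 0 < INR r * c) by (apply Rmult_lt_0_compat; [apply lt_0_INR; lia | lra]).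
  destruct (archimed_cor1 _ Hrc) as [K [HK HK0]].
  destruct (Hacc (arc_coloring r al) (fun n _ => arc_coloring_lt r al n Hr) (S K))
    as [x [col [Hcol Hseq]]]; [lia |].
  set (g i := frac_part (INR r * (INR (x i) * al))).
  assert (Hg : forall i, (1 <= i <= S K)%nat -> INR (i - 1) * (INR r * c) <= g i).
  { induction i as [| i IH]; intros Hi; [lia |].
    destruct (Nat.eq_dec i 0) as [-> | Hi0].
    - unfold g; destruct (base_fp (INR r * (INR (x 1%nat) * al))); simpl; lra.
    - destruct (Hseq i ltac:(lia)) as [Hlt Hdiff].
      assert (Hsame : arc_coloring r al (x i) = arc_coloring r al (x (S i))).
      { destruct (Hcol i ltac:(lia)) as [_ ->]; destruct (Hcol (S i) ltac:(lia)) as [_ ->].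
        reflexivity. }
      pose proof (arc_coloring_step r al c (x i) (x (S i)) Hr ltac:(lra) ltac:(lia)
                    (HD _ Hdiff) Hsame).
      specialize (IH ltac:(lia)); fold (g i) (g (S i)) in *.
      replace (S i - 1)%nat with (S (i - 1)) by lia; rewrite S_INR; lra. }
  pose proof (Hg (S K) ltac:(lia)) as HgK.
  destruct (base_fp (INR r * (INR (x (S K)) * al))); fold (g (S K)) in *.
  replace (S K - 1)%nat with K in HgK by lia.
  assert (HK1 : 1 < INR K * (INR r * c)).
  { assert (0 < INR K) by (apply lt_0_INR; lia).
    apply Rmult_lt_reg_l with (/ INR K); [apply Rinv_0_lt_compat; lra |].
    rewrite <- Rmult_assoc, Rinv_l, Rmult_1_l, Rmult_1_r; lra. }
  lra.
Qed.

Lemma incr_from1_le (d : nat -> nat) :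
  (forall n, (1 <= n)%nat -> (d n < d (S n))%nat) ->
  forall i j, (1 <= i <= j)%nat -> (d i <= d j)%nat.
Proof.
  intros Hinc i j [Hi Hij]; induction Hij as [| j Hij IH]; [lia |].
  pose proof (Hinc j ltac:(lia)); lia.
Qed.

Lemma frac_in_of_eventual_growth (d : nat -> nat) (N : nat) (q w c : R) :
  (1 <= N)%nat -> (1 <= d 1)%nat -> (forall n, (1 <= n)%nat -> (d n < d (S n))%nat) ->
  (forall n, (N <= n)%nat -> INR (d (S n)) >= q * INR (d n)) ->
  0 < c -> 0 <= w -> w * (q - 1) >= 1 ->
  exists al c0, 0 < c0 /\ forall n, (1 <= n)%nat -> frac_in c0 (c + w) (INR (d n) * al).
Proof.
  intros HN Hd1 Hinc Hgrowth Hc Hw Hwq.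
  pose proof (incr_from1_le d Hinc) as Hle.
  set (e k := INR (d (N + k)%nat)).
  assert (He : forall k, 0 < e k).
  { intro k; apply lt_0_INR; pose proof (Hle 1%nat (N + k)%nat ltac:(lia)); lia. }
  assert (Heg : forall k, e (S k) >= q * e k).
  { intro k; unfold e; rewrite Nat.add_succ_r; apply Hgrowth; lia. }
  destruct (lacunary_frac_in e q w c He Heg Hw Hwq) as [al [Hal0 Hal]].
  unfold e in Hal0; rewrite Nat.add_0_r in Hal0.
  assert (Hd1N : 0 < INR (d 1%nat) <= INR (d N)).
  { split; [apply lt_0_INR | apply le_INR, Hle]; lia. }
  assert (Hal_pos : 0 <= al) by nra.
  (* The first terms [d n < d N] are handled by shrinking the lower end to
     [c * d 1 / d N]. *)
  exists al, (c * INR (d 1%nat) / INR (d N)); split.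
  { apply Rmult_lt_0_compat; [nra | apply Rinv_0_lt_compat; lra]. }
  assert (Hc0 : c * INR (d 1%nat) / INR (d N) <= c).
  { apply Rmult_le_reg_r with (INR (d N)); [lra |].
    unfold Rdiv; rewrite Rmult_assoc, Rinv_l; nra. }
  intros n Hn; destruct (Nat.le_gt_cases N n) as [HNn | HnN].
  - apply frac_in_weaken with c (c + w); [lra | lra |].
    replace n with (N + (n - N))%nat by lia; apply Hal.
  - assert (Hdn : INR (d 1%nat) <= INR (d n) <= INR (d N)).
    { split; apply le_INR, Hle; lia. }
    exists 0%Z; split; [| nra].
    apply Rmult_le_reg_r with (INR (d N)); [lra |].
    unfold Rdiv; rewrite Rplus_0_l, Rmult_assoc, Rinv_l; nra.
Qed.

Lemma growth_window (r : nat) (delta : R) :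
  (2 <= r)%nat -> 0 < delta ->
  0 < 1 + 1 / INR (r - 1) + delta /\ / (1 + 1 / INR (r - 1) + delta) < 1 - / INR r.
Proof.
  intros Hr Hdelta.
  rewrite minus_INR by lia; change (INR 1) with 1.
  assert (Hr2 : 2 <= INR r) by (apply (le_INR 2); lia).
  assert (Hs : 0 < 1 / (INR r - 1)) by (apply Rdiv_lt_0_compat; lra).
  split; [lra |].
  assert (Hinv : 0 < / INR r <= / 2).
  { split; [apply Rinv_0_lt_compat | apply Rinv_le_contravar]; lra. }
  apply Rmult_lt_reg_r with (1 + 1 / (INR r - 1) + delta); [lra |].
  rewrite Rinv_l by lra.
  (* [(1 - 1/r) * (1 + 1/(r-1)) = 1] *)
  replace ((1 - / INR r) * (1 + 1 / (INR r - 1) + delta))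
    with (1 + delta * (1 - / INR r)) by (field; lra).
  nra.
Qed.

Theorem theorem1 (r : nat) (d : nat -> nat) :
  (2 <= r)%nat ->
  (1 <= d 1)%nat ->
  (forall n, (1 <= n)%nat -> (d n < d (S n))%nat) ->
  (exists (delta : R) (N : nat), 0 < delta /\ (1 <= N)%nat /\
     forall n, (N <= n)%nat ->
       INR (d (S n)) >= (2 + 1 / INR (r - 1) + delta) * INR (d n)) ->
  ~ accessible r (range_from1 d).
Proof.
  intros Hr Hd1 Hinc [delta [N [Hdelta [HN Hgrowth]]]].
  set (p := 1 + 1 / INR (r - 1) + delta).
  destruct (growth_window r delta Hr Hdelta) as [Hp Hwindow]; fold p in Hp, Hwindow.
  destruct (frac_in_of_eventual_growth d N (2 + 1 / INR (r - 1) + delta) (/ p)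
              (1 - / INR r - / p) HN Hd1 Hinc Hgrowth) as [al [c [Hc Hfrac]]].
  - lra.
  - left; apply Rinv_0_lt_compat, Hp.
  - replace (2 + 1 / INR (r - 1) + delta - 1) with p by (unfold p; ring).
    rewrite Rinv_l; lra.
  - apply (not_accessible_of_frac_in r _ al c); [lia | exact Hc |].
    intros m [n [Hn <-]].
    replace (1 - / INR r) with (1 - / INR r - / p + / p) by ring.
    now apply Hfrac.
Qed.
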